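(* Let $(R,1_R)$ be a unital Riesz space. Then, for every pseudo MV-algebra $M$, every $(R,1_R)$-state-morphism on $M$ has a kernel which is a maximal ideal of $M$, if and only if $(R,1_R)$ is isomorphic (as a unital Riesz space) to $(\mathbb R,1)$.
   Context: Pseudo MV-algebra: an algebra $(M;\oplus,{}^-,{}^\sim,0,1)$, $0\neq1$, satisfying the standard pseudo MV-algebra axioms; equivalently (up to isomorphism) $M=\Gamma(G,u)=[0,u]$ for a unital $\ell$-group $(G,u)$ with $x\oplus y=(x+y)\wedge u$, $x^-=u-x$, $x^\sim=-x+u$. Ideal: nonempty down-set closed under $\oplus$; maximal = maximal among proper ideals. A unital Riesz space $(R,1_R)$ is a Riesz space with a fixed strong unit $1_R$; $\Gamma(R,1_R)$ is the MV-algebra on $[0,1_R]$. An $(R,1_R)$-state-morphism on $M$ is a pseudo MV-algebra homomorphism $s:M\to\Gamma(R,1_R)$, with kernel $\mathrm{Ker}(s)=\{x:s(x)=0\}$. *)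

From Stdlib Require Import Reals.
Open Scope R_scope.

(** * Pseudo MV-algebras (Georgescu--Iorgulescu axioms) *)
Record PMV := {
  pm_car :> Type;
  pm_add : pm_car -> pm_car -> pm_car;
  pm_neg : pm_car -> pm_car;
  pm_til : pm_car -> pm_car;
  pm_zero : pm_car;
  pm_one : pm_car;
  pm_mul := fun x y => pm_til (pm_add (pm_neg x) (pm_neg y));
  pm_A1 : forall x y z, pm_add x (pm_add y z) = pm_add (pm_add x y) z;
  pm_A2l : forall x, pm_add x pm_zero = x;
  pm_A2r : forall x, pm_add pm_zero x = x;
  pm_A3l : forall x, pm_add x pm_one = pm_one;
  pm_A3r : forall x, pm_add pm_one x = pm_one;
  pm_A4a : pm_til pm_one = pm_zero;
  pm_A4b : pm_neg pm_one = pm_zero;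
  pm_A5 : forall x y, pm_til (pm_add (pm_neg x) (pm_neg y))
                      = pm_neg (pm_add (pm_til x) (pm_til y));
  pm_A6a : forall x y, pm_add x (pm_mul (pm_til x) y) = pm_add y (pm_mul (pm_til y) x);
  pm_A6b : forall x y, pm_add y (pm_mul (pm_til y) x) = pm_add (pm_mul x (pm_neg y)) y;
  pm_A6c : forall x y, pm_add (pm_mul x (pm_neg y)) y = pm_add (pm_mul y (pm_neg x)) x;
  pm_A7 : forall x y, pm_mul x (pm_add (pm_neg x) y) = pm_mul (pm_add x (pm_til y)) y;
  pm_A8 : forall x, pm_til (pm_neg x) = x;
  pm_nontriv : pm_zero <> pm_one
}.

Definition pm_le (M : PMV) (x y : M) : Prop := pm_add M (pm_neg M x) y = pm_one M.

Definition pm_ideal (M : PMV) (I : M -> Prop) : Prop :=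
  (exists x, I x) /\
  (forall x y : M, pm_le M x y -> I y -> I x) /\
  (forall x y, I x -> I y -> I (pm_add M x y)).

Definition pm_proper (M : PMV) (I : M -> Prop) : Prop := exists x, ~ I x.

Definition pm_maximal_ideal (M : PMV) (I : M -> Prop) : Prop :=
  pm_ideal M I /\ pm_proper M I /\
  forall J : M -> Prop, pm_ideal M J -> pm_proper M J ->
    (forall x, I x -> J x) -> forall x, J x -> I x.

Record Riesz := {
  rs_car :> Type;
  rs_add : rs_car -> rs_car -> rs_car;
  rs_zero : rs_car;
  rs_opp : rs_car -> rs_car;
  rs_scal : R -> rs_car -> rs_car;
  rs_le : rs_car -> rs_car -> Prop;
  rs_join : rs_car -> rs_car -> rs_car;
  rs_meet : rs_car -> rs_car -> rs_car;
  rs_addA : forall x y z, rs_add x (rs_add y z) = rs_add (rs_add x y) z;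
  rs_addC : forall x y, rs_add x y = rs_add y x;
  rs_add0 : forall x, rs_add rs_zero x = x;
  rs_addN : forall x, rs_add (rs_opp x) x = rs_zero;
  rs_scalDr : forall a x y, rs_scal a (rs_add x y) = rs_add (rs_scal a x) (rs_scal a y);
  rs_scalDl : forall a b x, rs_scal (a + b) x = rs_add (rs_scal a x) (rs_scal b x);
  rs_scalA : forall a b x, rs_scal (a * b) x = rs_scal a (rs_scal b x);
  rs_scal1 : forall x, rs_scal 1 x = x;
  rs_le_refl : forall x, rs_le x x;
  rs_le_anti : forall x y, rs_le x y -> rs_le y x -> x = y;
  rs_le_trans : forall x y z, rs_le x y -> rs_le y z -> rs_le x z;
  rs_le_add : forall x y z, rs_le x y -> rs_le (rs_add x z) (rs_add y z);
  rs_le_scal : forall a x y, 0 <= a -> rs_le x y -> rs_le (rs_scal a x) (rs_scal a y);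
  rs_join_l : forall x y, rs_le x (rs_join x y);
  rs_join_r : forall x y, rs_le y (rs_join x y);
  rs_join_lub : forall x y z, rs_le x z -> rs_le y z -> rs_le (rs_join x y) z;
  rs_meet_l : forall x y, rs_le (rs_meet x y) x;
  rs_meet_r : forall x y, rs_le (rs_meet x y) y;
  rs_meet_glb : forall x y z, rs_le z x -> rs_le z y -> rs_le z (rs_meet x y)
}.

Definition strong_unit (V : Riesz) (u : V) : Prop :=
  rs_le V (rs_zero V) u /\
  forall x : V, exists n : nat, rs_le V x (rs_scal V (INR n) u).

(** (V,u)-state-morphism: a pseudo MV-homomorphism M -> Gamma(V,u), where
    Gamma(V,u) = [0,u] with x(+)y = (x+y)/\u and x^- = x^~ = u - x. *)
Definition state_morphism (V : Riesz) (u : V) (M : PMV) (s : M -> V) : Prop :=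
  (forall x, rs_le V (rs_zero V) (s x) /\ rs_le V (s x) u) /\
  (forall x y, s (pm_add M x y) = rs_meet V (rs_add V (s x) (s y)) u) /\
  (forall x, s (pm_neg M x) = rs_add V u (rs_opp V (s x))) /\
  (forall x, s (pm_til M x) = rs_add V u (rs_opp V (s x))) /\
  s (pm_zero M) = rs_zero V /\
  s (pm_one M) = u.

Definition kernel (V : Riesz) (M : PMV) (s : M -> V) : M -> Prop :=
  fun x => s x = rs_zero V.

Definition unital_iso_to_reals (V : Riesz) (u : V) : Prop :=
  exists f : V -> R,
    (forall x y, f (rs_add V x y) = f x + f y) /\
    (forall a x, f (rs_scal V a x) = a * f x) /\
    (forall x y, f (rs_join V x y) = Rmax (f x) (f y)) /\
    (forall x y, f (rs_meet V x y) = Rmin (f x) (f y)) /\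
    (forall x y, f x = f y -> x = y) /\
    (forall r : R, exists x, f x = r) /\
    f u = 1.

From Stdlib Require Import Reals Lra Classical ProofIrrelevance ClassicalEpsilon
  FunctionalExtensionality PropExtensionality.
Open Scope R_scope.

(* If the kernel [{0}] of the inclusion [Γ(V,u) ⊆ V] is maximal, every nonzero
   element of [[0,u]] has a multiple above [u].  As [u] is a strong unit, every
   [x] is then [c·u] with [c = sup {r | r·u <= x}], and [x ↦ c] is an
   isomorphism onto [(ℝ,1)].  Conversely, through such an isomorphism a
   state-morphism becomes [[0,1]]-valued, and an ideal containing an [x] of
   positive value contains a multiple [z] of [x] of value [1], hence
   [z^- ⊕ z = 1]. *)

Local Notation "x +v y" := (rs_add _ x y) (at level 50, left associativity).
Local Notation "x -v y" := (rs_add _ x (rs_opp _ y)) (at level 50, left associativity).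
Local Notation "x <=v y" := (rs_le _ x y) (at level 70).
Local Notation "a *v x" := (rs_scal _ a x) (at level 40).
Local Notation vopp := (rs_opp _).
Local Notation v0 := (rs_zero _).
Local Notation vjoin := (rs_join _).
Local Notation vmeet := (rs_meet _).

Section LinearIdentities.
Context {V : Riesz}.

Lemma addv0 (x : V) : x +v v0 = x.
Proof. rewrite rs_addC; apply rs_add0. Qed.

Lemma addvN (x : V) : x -v x = v0.
Proof. rewrite rs_addC; apply rs_addN. Qed.

Lemma scale0v (x : V) : 0 *v x = v0.
Proof.
  assert (H : 0 *v x +v 0 *v x = 0 *v x +v v0).
  { rewrite <- rs_scalDl, addv0; f_equal; ring. }
  apply (f_equal (fun z => vopp (0 *v x) +v z)) in H.
  rewrite !rs_addA, rs_addN, !rs_add0 in H. exact H.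
Qed.

Lemma scaleNv (r : R) (x : V) : (- r) *v x = vopp (r *v x).
Proof.
  assert (H : (- r) *v x +v r *v x = v0).
  { rewrite <- rs_scalDl, Rplus_opp_l. apply scale0v. }
  apply (f_equal (fun z => z -v r *v x)) in H.
  rewrite <- rs_addA, addvN, addv0, rs_add0 in H. exact H.
Qed.

Lemma oppvD (x y : V) : vopp (x +v y) = vopp x +v vopp y.
Proof.
  rewrite <- (rs_scal1 _ (x +v y)), <- scaleNv, rs_scalDr, !scaleNv, !rs_scal1.
  reflexivity.
Qed.

Lemma scalev0 (r : R) : r *v (v0 : V) = v0.
Proof. rewrite <- (scale0v v0), <- rs_scalA, Rmult_0_r. reflexivity. Qed.

Lemma addvACA (a b c d : V) : (a +v b) +v (c +v d) = (a +v c) +v (b +v d).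
Proof.
  rewrite !rs_addA. f_equal. rewrite <- !rs_addA. f_equal. apply rs_addC.
Qed.

(* Identities between linear combinations of at most three atoms are decided
   reflectively, by comparing real coefficients (tactic [vlinear] below). *)
Inductive lin_expr :=
  | LAtom (i : nat) | LZero | LAdd (a b : lin_expr) | LOpp (a : lin_expr)
  | LScale (r : R) (a : lin_expr).

Definition atoms3 (a b c : V) (i : nat) : V :=
  match i with 0 => a | 1 => b | 2 => c | _ => v0 end.

Fixpoint lin_eval (env : nat -> V) (e : lin_expr) : V :=
  match e with
  | LAtom i => env i
  | LZero => v0
  | LAdd a b => lin_eval env a +v lin_eval env b
  | LOpp a => vopp (lin_eval env a)
  | LScale r a => r *v lin_eval env a
  end.

Fixpoint lin_coef (e : lin_expr) (i : nat) : R :=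
  match e with
  | LAtom j => if Nat.eqb j i then 1 else 0
  | LZero => 0
  | LAdd a b => lin_coef a i + lin_coef b i
  | LOpp a => - lin_coef a i
  | LScale r a => r * lin_coef a i
  end.

Definition lin_comb3 (env : nat -> V) (c : nat -> R) : V :=
  c 0%nat *v env 0%nat +v (c 1%nat *v env 1%nat +v c 2%nat *v env 2%nat).

Lemma lin_eval_comb3 (a b c : V) (e : lin_expr) :
  lin_eval (atoms3 a b c) e = lin_comb3 (atoms3 a b c) (lin_coef e).
Proof.
  unfold lin_comb3; induction e as [j| |e1 IH1 e2 IH2|e IH|r e IH]; simpl.
  - destruct j as [|[|[|j]]]; simpl;
      rewrite ?scale0v, ?rs_scal1, ?rs_add0, ?addv0; reflexivity.
  - rewrite !scale0v, !rs_add0. reflexivity.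
  - rewrite IH1, IH2, !rs_scalDl, addvACA; f_equal; apply addvACA.
  - rewrite IH, !oppvD, !scaleNv. reflexivity.
  - rewrite IH, !rs_scalDr, !rs_scalA. reflexivity.
Qed.

Lemma lin_comb3_ext (env : nat -> V) (c1 c2 : nat -> R) :
  c1 0%nat = c2 0%nat -> c1 1%nat = c2 1%nat -> c1 2%nat = c2 2%nat ->
  lin_comb3 env c1 = lin_comb3 env c2.
Proof. unfold lin_comb3; intros -> -> ->; reflexivity. Qed.

End LinearIdentities.

Ltac reify_lin a b c t :=
  lazymatch t with
  | rs_add _ ?x ?y =>
      let rx := reify_lin a b c x in let ry := reify_lin a b c y in constr:(LAdd rx ry)
  | rs_opp _ ?x => let rx := reify_lin a b c x in constr:(LOpp rx)
  | rs_scal _ ?r ?x => let rx := reify_lin a b c x in constr:(LScale r rx)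
  | rs_zero _ => constr:(LZero)
  | _ =>
    lazymatch constr:((t, a)) with (?x, ?x) => constr:(LAtom 0) | _ =>
    lazymatch constr:((t, b)) with (?x, ?x) => constr:(LAtom 1) | _ =>
    lazymatch constr:((t, c)) with (?x, ?x) => constr:(LAtom 2) end end end
  end.

Ltac vlinear3 a b c :=
  lazymatch goal with |- ?l = ?r =>
    let rl := reify_lin a b c l in let rr := reify_lin a b c r in
    change (lin_eval (atoms3 a b c) rl = lin_eval (atoms3 a b c) rr);
    rewrite !lin_eval_comb3; apply lin_comb3_ext; simpl; ring
  end.
Tactic Notation "vlinear" constr(a) := vlinear3 a a a.
Tactic Notation "vlinear" constr(a) constr(b) := vlinear3 a b b.
Tactic Notation "vlinear" constr(a) constr(b) constr(c) := vlinear3 a b c.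

Section OrderLemmas.
Context {V : Riesz}.

Lemma lev_congr (a b c d : V) : a = c -> b = d -> c <=v d -> a <=v b.
Proof. intros -> ->; auto. Qed.

Lemma lev_add2l (x y z : V) : x <=v y -> z +v x <=v z +v y.
Proof. intros H; rewrite (rs_addC _ z x), (rs_addC _ z y); apply rs_le_add, H. Qed.

Lemma lev_add (a b c d : V) : a <=v b -> c <=v d -> a +v c <=v b +v d.
Proof. intros H1 H2; eapply rs_le_trans; [apply rs_le_add, H1 | apply lev_add2l, H2]. Qed.

Lemma lev_add2r_cancel (x y z : V) : x +v z <=v y +v z -> x <=v y.
Proof.
  intros H. apply (rs_le_add _ _ _ (vopp z)) in H.
  revert H; apply lev_congr; vlinear x y z.
Qed.

Lemma lev_opp (x y : V) : x <=v y -> vopp y <=v vopp x.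
Proof.
  intros H. apply (rs_le_add _ _ _ (vopp x +v vopp y)) in H.
  revert H; apply lev_congr; vlinear x y.
Qed.

Lemma subv_ge0 (x y : V) : x <=v y -> v0 <=v y -v x.
Proof.
  intros H. apply (rs_le_add _ _ _ (vopp x)) in H.
  revert H; apply lev_congr; vlinear x y.
Qed.

Lemma scalev_ge0 (a : R) (x : V) : 0 <= a -> v0 <=v x -> v0 <=v a *v x.
Proof. intros Ha Hx. rewrite <- (scalev0 a). apply rs_le_scal; auto. Qed.

Lemma lev_scale2r (a b : R) (x : V) : a <= b -> v0 <=v x -> a *v x <=v b *v x.
Proof.
  intros Hab Hx. assert (H := scalev_ge0 (b - a) x ltac:(lra) Hx).
  apply (lev_add2l _ _ (a *v x)) in H. revert H; apply lev_congr; vlinear x.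
Qed.

Lemma meet_l (a b : V) : a <=v b -> vmeet a b = a.
Proof.
  intros H; apply rs_le_anti; [apply rs_meet_l | apply rs_meet_glb; auto using rs_le_refl].
Qed.

Lemma meet_r (a b : V) : b <=v a -> vmeet a b = b.
Proof.
  intros H; apply rs_le_anti; [apply rs_meet_r | apply rs_meet_glb; auto using rs_le_refl].
Qed.

Lemma join_r (a b : V) : a <=v b -> vjoin a b = b.
Proof.
  intros H; apply rs_le_anti; [apply rs_join_lub; auto using rs_le_refl | apply rs_join_r].
Qed.

Lemma join_l (a b : V) : b <=v a -> vjoin a b = a.
Proof.
  intros H; apply rs_le_anti; [apply rs_join_lub; auto using rs_le_refl | apply rs_join_l].
Qed.

Lemma meetC (a b : V) : vmeet a b = vmeet b a.
Proof. apply rs_le_anti; apply rs_meet_glb; auto using rs_meet_l, rs_meet_r. Qed.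

Lemma joinC (a b : V) : vjoin a b = vjoin b a.
Proof. apply rs_le_anti; apply rs_join_lub; auto using rs_join_l, rs_join_r. Qed.

Lemma meetA (a b c : V) : vmeet a (vmeet b c) = vmeet (vmeet a b) c.
Proof.
  apply rs_le_anti; repeat apply rs_meet_glb;
    eauto using rs_meet_l, rs_meet_r, rs_le_trans.
Qed.

Lemma meetDr (a b c : V) : vmeet a b +v c = vmeet (a +v c) (b +v c).
Proof.
  apply rs_le_anti.
  - apply rs_meet_glb; apply rs_le_add; auto using rs_meet_l, rs_meet_r.
  - apply (lev_add2r_cancel _ _ (vopp c)).
    replace (vmeet a b +v c -v c) with (vmeet a b) by vlinear (vmeet a b) c.
    apply rs_meet_glb.
    + replace a with (a +v c -v c) at 2 by vlinear a c. apply rs_le_add, rs_meet_l.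
    + replace b with (b +v c -v c) at 2 by vlinear b c. apply rs_le_add, rs_meet_r.
Qed.

Lemma joinDr (a b c : V) : vjoin a b +v c = vjoin (a +v c) (b +v c).
Proof.
  apply rs_le_anti.
  - apply (lev_add2r_cancel _ _ (vopp c)).
    replace (vjoin a b +v c -v c) with (vjoin a b) by vlinear (vjoin a b) c.
    apply rs_join_lub.
    + replace a with (a +v c -v c) at 1 by vlinear a c. apply rs_le_add, rs_join_l.
    + replace b with (b +v c -v c) at 1 by vlinear b c. apply rs_le_add, rs_join_r.
  - apply rs_join_lub; apply rs_le_add; auto using rs_join_l, rs_join_r.
Qed.

Lemma joinDl (a b c : V) : c +v vjoin a b = vjoin (c +v a) (c +v b).
Proof. rewrite rs_addC, joinDr, (rs_addC _ a), (rs_addC _ b); reflexivity. Qed.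

Lemma oppv_meet (a b : V) : vopp (vmeet a b) = vjoin (vopp a) (vopp b).
Proof.
  set (m := vmeet a b); set (j := vjoin (vopp a) (vopp b)).
  apply rs_le_anti.
  - apply (lev_add2r_cancel _ _ (m -v j)).
    replace (vopp m +v (m -v j)) with (vopp j) by vlinear m j.
    replace (j +v (m -v j)) with m by vlinear m j.
    unfold m, j; apply rs_meet_glb.
    + replace a with (vopp (vopp a)) at 2 by vlinear a. apply lev_opp, rs_join_l.
    + replace b with (vopp (vopp b)) at 2 by vlinear b. apply lev_opp, rs_join_r.
  - unfold m, j; apply rs_join_lub; apply lev_opp; auto using rs_meet_l, rs_meet_r.
Qed.

End OrderLemmas.

Section UnitInterval.
Context {V : Riesz} (u : V).

Lemma sub_meet_unit (p : V) : u -v vmeet p u = vjoin (u -v p) v0.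
Proof. rewrite oppv_meet, joinDl, addvN. reflexivity. Qed.

Lemma sub_meet_unit_sum (a b : V) :
  u -v vmeet ((u -v a) +v (u -v b)) u = vjoin (a +v b -v u) v0.
Proof. rewrite sub_meet_unit. f_equal. vlinear u a b. Qed.

Lemma meet_unit_add_pos_diff (x y : V) : x <=v u -> y <=v u ->
  vmeet (x +v vjoin (y -v x) v0) u = vjoin x y.
Proof.
  intros Hx Hy. rewrite joinDl, addv0.
  replace (x +v (y -v x)) with y by vlinear x y.
  rewrite meet_l; [apply joinC | apply rs_join_lub; auto].
Qed.

Lemma meet_unit_add_meet (p x : V) : v0 <=v x ->
  vmeet (vmeet p u +v x) u = vmeet (p +v x) u.
Proof.
  intros Hx. rewrite meetDr, <- meetA. f_equal. apply meet_r.
  replace u with (u +v v0) at 1 by apply addv0. apply lev_add2l, Hx.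
Qed.

Definition gamma : Type := {x : V | v0 <=v x /\ x <=v u}.

Lemma gamma_eq (x y : gamma) : proj1_sig x = proj1_sig y -> x = y.
Proof. destruct x, y; simpl; intros ->; f_equal; apply proof_irrelevance. Qed.

Definition gamma_add (x y : gamma) : gamma.
Proof.
  refine (exist _ (vmeet (proj1_sig x +v proj1_sig y) u) _).
  destruct x as [x [Hx1 Hx2]], y as [y [Hy1 Hy2]]; simpl. split.
  - apply rs_meet_glb; [|eapply rs_le_trans; eauto].
    rewrite <- (rs_add0 _ v0). apply lev_add; auto.
  - apply rs_meet_r.
Defined.

Definition gamma_neg (x : gamma) : gamma.
Proof.
  refine (exist _ (u -v proj1_sig x) _).
  destruct x as [x [Hx1 Hx2]]; simpl. split.
  - apply subv_ge0, Hx2.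
  - rewrite <- (addv0 u) at 2. apply lev_add2l.
    replace v0 with (vopp (v0 : V)) by vlinear u. apply lev_opp, Hx1.
Defined.

Hypothesis Hu0 : v0 <=v u.

Definition gamma_zero : gamma := exist _ v0 (conj (rs_le_refl _ _) Hu0).
Definition gamma_one : gamma := exist _ u (conj Hu0 (rs_le_refl _ _)).

Ltac gamma_val :=
  repeat match goal with
  | x : gamma |- _ =>
      let H1 := fresh "H" in let H2 := fresh "H" in destruct x as [x [H1 H2]]
  end;
  apply gamma_eq; simpl.

Lemma gamma_addA (x y z : gamma) :
  gamma_add x (gamma_add y z) = gamma_add (gamma_add x y) z.
Proof. gamma_val. rewrite (rs_addC _ x), !meet_unit_add_meet; auto. f_equal. vlinear x y z. Qed.

Lemma gamma_addx0 (x : gamma) : gamma_add x gamma_zero = x.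
Proof. gamma_val. rewrite addv0. apply meet_l; auto. Qed.

Lemma gamma_add0x (x : gamma) : gamma_add gamma_zero x = x.
Proof. gamma_val. rewrite rs_add0. apply meet_l; auto. Qed.

Lemma gamma_addx1 (x : gamma) : gamma_add x gamma_one = gamma_one.
Proof. gamma_val. apply meet_r. rewrite <- (rs_add0 _ u) at 1. apply rs_le_add; auto. Qed.

Lemma gamma_add1x (x : gamma) : gamma_add gamma_one x = gamma_one.
Proof. gamma_val. apply meet_r. rewrite <- (addv0 u) at 1. apply lev_add2l; auto. Qed.

Lemma gamma_neg1 : gamma_neg gamma_one = gamma_zero.
Proof. gamma_val. apply addvN. Qed.

Lemma gamma_negK (x : gamma) : gamma_neg (gamma_neg x) = x.
Proof. gamma_val. vlinear u x. Qed.

(* The remaining axioms are identities of the lattice-ordered group [V],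
   after [x ⊙ y] is evaluated to [(x + y - u) ∨ 0] by [sub_meet_unit_sum]. *)
Lemma gamma_A6a (x y : gamma) :
  gamma_add x (gamma_neg (gamma_add (gamma_neg (gamma_neg x)) (gamma_neg y)))
  = gamma_add y (gamma_neg (gamma_add (gamma_neg (gamma_neg y)) (gamma_neg x))).
Proof.
  gamma_val. rewrite !sub_meet_unit_sum.
  replace (u -v x +v y -v u) with (y -v x) by vlinear u x y.
  replace (u -v y +v x -v u) with (x -v y) by vlinear u x y.
  rewrite !meet_unit_add_pos_diff; auto. apply joinC.
Qed.

Lemma gamma_A6b (x y : gamma) :
  gamma_add y (gamma_neg (gamma_add (gamma_neg (gamma_neg y)) (gamma_neg x)))
  = gamma_add (gamma_neg (gamma_add (gamma_neg x) (gamma_neg (gamma_neg y)))) y.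
Proof.
  gamma_val. rewrite !sub_meet_unit_sum.
  replace (u -v y +v x -v u) with (x -v y) by vlinear u x y.
  replace (x +v (u -v y) -v u) with (x -v y) by vlinear u x y.
  rewrite (rs_addC _ (vjoin _ _) y). reflexivity.
Qed.

Lemma gamma_A6c (x y : gamma) :
  gamma_add (gamma_neg (gamma_add (gamma_neg x) (gamma_neg (gamma_neg y)))) y
  = gamma_add (gamma_neg (gamma_add (gamma_neg y) (gamma_neg (gamma_neg x)))) x.
Proof.
  gamma_val. rewrite !sub_meet_unit_sum.
  replace (x +v (u -v y) -v u) with (x -v y) by vlinear u x y.
  replace (y +v (u -v x) -v u) with (y -v x) by vlinear u x y.
  rewrite (rs_addC _ (vjoin _ _) y), (rs_addC _ (vjoin _ _) x),
    !meet_unit_add_pos_diff; auto.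
  apply joinC.
Qed.

Lemma gamma_A7 (x y : gamma) :
  gamma_neg (gamma_add (gamma_neg x) (gamma_neg (gamma_add (gamma_neg x) y)))
  = gamma_neg (gamma_add (gamma_neg (gamma_add x (gamma_neg y))) (gamma_neg y)).
Proof.
  gamma_val. rewrite !sub_meet_unit_sum.
  set (p := vmeet (u -v x +v y) u); set (q := vmeet (x +v (u -v y)) u).
  replace (x +v p -v u) with (p +v (x -v u)) by vlinear p x u.
  replace (q +v y -v u) with (q +v (y -v u)) by vlinear q y u.
  unfold p, q; rewrite !meetDr.
  replace (u -v x +v y +v (x -v u)) with y by vlinear u x y.
  replace (u +v (x -v u)) with x by vlinear u x.
  replace (x +v (u -v y) +v (y -v u)) with x by vlinear u x y.
  replace (u +v (y -v u)) with y by vlinear u y.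
  rewrite !join_l by (apply rs_meet_glb; auto). apply meetC.
Qed.

Hypothesis Hun : v0 <> u.

Definition gamma_pmv : PMV :=
  Build_PMV gamma gamma_add gamma_neg gamma_neg gamma_zero gamma_one
    gamma_addA gamma_addx0 gamma_add0x gamma_addx1 gamma_add1x gamma_neg1 gamma_neg1
    (fun x y => eq_refl) gamma_A6a gamma_A6b gamma_A6c gamma_A7 gamma_negK
    (fun e => Hun (f_equal (@proj1_sig _ _) e)).

Lemma gamma_val_state_morphism : state_morphism V u gamma_pmv (@proj1_sig _ _).
Proof.
  split; [intros [x [H1 H2]]; simpl; split; assumption |].
  repeat split; reflexivity.
Qed.

End UnitInterval.

Definition kernels_maximal (V : Riesz) (u : V) : Prop :=
  forall (M : PMV) (s : M -> V), state_morphism V u M s -> pm_maximal_ideal M (kernel V M s).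

Definition bool_pmv : PMV.
Proof.
  refine (Build_PMV bool orb negb negb false true _ _ _ _ _ _ _ _ _ _ _ _ _ ltac:(discriminate));
    intros; repeat match goal with b : bool |- _ => destruct b end; reflexivity.
Defined.

(* When [u = 0] the zero map on the Boolean algebra is a state-morphism, and
   its kernel is not proper. *)
Lemma unit_neq0_of_kernels_maximal (V : Riesz) (u : V) :
  kernels_maximal V u -> v0 <> u.
Proof.
  intros Hmax E.
  assert (Hs : state_morphism V u bool_pmv (fun _ => v0)).
  { rewrite <- E. repeat split; try apply rs_le_refl; try reflexivity; intros.
    - rewrite rs_add0. symmetry; apply meet_l, rs_le_refl.
    - rewrite addvN. reflexivity.
    - rewrite addvN. reflexivity. }
  destruct (Hmax _ _ Hs) as [_ [[x Hx] _]]. apply Hx. reflexivity.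
Qed.

(* [Γ(V,u)] is simple: every nonzero element of [[0,u]] generates it as an ideal. *)
Definition gamma_simple (V : Riesz) (u : V) : Prop :=
  forall v, v0 <=v v -> v <=v u -> v <> v0 -> exists n : nat, u <=v INR n *v v.

Section GammaSimple.
Context {V : Riesz} (u : V) (Hu0 : v0 <=v u) (Hun : v0 <> u).

Lemma gamma_le_val (x y : gamma_pmv u Hu0 Hun) :
  pm_le _ x y -> proj1_sig x <=v proj1_sig y.
Proof.
  unfold pm_le; intros Hxy.
  change (gamma_add u (gamma_neg u x) y = gamma_one u Hu0) in Hxy.
  apply (f_equal (@proj1_sig _ _)) in Hxy. simpl in Hxy.
  destruct x as [x [Hx1 Hx2]], y as [y [Hy1 Hy2]]; simpl in *.
  assert (Hle : u <=v u -v x +v y) by (rewrite <- Hxy at 1; apply rs_meet_l).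
  apply (rs_le_add _ _ _ (x -v u)) in Hle. revert Hle; apply lev_congr; vlinear u x y.
Qed.

Definition gamma_multiples (v : V) (z : gamma_pmv u Hu0 Hun) : Prop :=
  exists n : nat, proj1_sig z <=v INR n *v v.

Lemma gamma_multiples_ideal (v : V) : pm_ideal _ (gamma_multiples v).
Proof.
  split; [|split].
  - exists (gamma_zero u Hu0), 0%nat. simpl. rewrite scale0v. apply rs_le_refl.
  - intros x y Hxy [n Hn]. exists n.
    eapply rs_le_trans; [apply gamma_le_val, Hxy | exact Hn].
  - intros x y [n Hn] [m Hm]. exists (n + m)%nat. simpl.
    eapply rs_le_trans; [apply rs_meet_l |].
    rewrite plus_INR, rs_scalDl. apply lev_add; auto.
Qed.

(* The kernel of the inclusion [Γ(V,u) → V] is [{0}]; by maximality the ideal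
   generated by [v ≠ 0] is all of [Γ(V,u)], so it contains [u]. *)
Lemma gamma_simple_of_kernels_maximal : kernels_maximal V u -> gamma_simple V u.
Proof.
  intros Hmax v Hv1 Hv2 Hv0.
  destruct (Hmax _ _ (gamma_val_state_morphism u Hu0 Hun)) as [_ [_ Hker]].
  destruct (classic (gamma_multiples v (gamma_one u Hu0))) as [Hone | Hnot_one].
  - exact Hone.
  - exfalso. apply Hv0.
    refine (Hker (gamma_multiples v) (gamma_multiples_ideal v)
              (ex_intro _ (gamma_one u Hu0) Hnot_one) _
              (exist _ v (conj Hv1 Hv2)) _).
    + intros x Hx. exists 0%nat. unfold kernel in Hx. rewrite Hx, scale0v. apply rs_le_refl.
    + exists 1%nat. simpl. rewrite rs_scal1. apply rs_le_refl.
Qed.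

End GammaSimple.

Lemma scale_le0_pos {V : Riesz} (a : R) (x : V) : 0 < a -> a *v x <=v v0 -> x <=v v0.
Proof.
  intros Ha H. apply (rs_le_scal _ (/ a)) in H; [|left; apply Rinv_0_lt_compat; auto].
  rewrite <- rs_scalA, scalev0, Rinv_l, rs_scal1 in H; auto. lra.
Qed.

Section MultiplesOfUnit.
Context {V : Riesz} (u : V) (Hu0 : v0 <=v u) (Hun : v0 <> u).

Lemma scale_unit_le (r t : R) : r *v u <=v t *v u -> r <= t.
Proof.
  intros H. destruct (Rle_or_lt r t) as [|Hlt]; auto. exfalso.
  apply (rs_le_add _ _ _ (vopp (t *v u))) in H.
  assert (Hdiff : (r - t) *v u <=v v0) by (revert H; apply lev_congr; vlinear u).
  apply scale_le0_pos in Hdiff; [|lra]. apply Hun, rs_le_anti; auto.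
Qed.

Lemma scale_unit_inj (r t : R) : r *v u = t *v u -> r = t.
Proof.
  intros H. apply Rle_antisym; apply scale_unit_le; rewrite H; apply rs_le_refl.
Qed.

Lemma unital_iso_of_multiples :
  (forall x : V, exists c, x = c *v u) -> unital_iso_to_reals V u.
Proof.
  intros Hmul.
  set (f := fun x => proj1_sig (constructive_indefinite_description _ (Hmul x))).
  assert (Hf : forall x, x = f x *v u).
  { intros x; unfold f; destruct constructive_indefinite_description; auto. }
  assert (Hf_eq : forall x a, x = a *v u -> f x = a).
  { intros x a Ha. apply scale_unit_inj. rewrite <- Hf. auto. }
  exists f. split; [|split; [|split; [|split; [|split; [|split]]]]].
  - intros x y. apply Hf_eq. rewrite rs_scalDl, <- !Hf. reflexivity.
  - intros a x. apply Hf_eq. rewrite rs_scalA, <- Hf. reflexivity.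
  - intros x y. apply Hf_eq. rewrite (Hf x), (Hf y) at 1.
    unfold Rmax. destruct (Rle_dec (f x) (f y)).
    + apply join_r, lev_scale2r; auto.
    + apply join_l, lev_scale2r; auto; lra.
  - intros x y. apply Hf_eq. rewrite (Hf x), (Hf y) at 1.
    unfold Rmin. destruct (Rle_dec (f x) (f y)).
    + apply meet_l, lev_scale2r; auto.
    + apply meet_r, lev_scale2r; auto; lra.
  - intros x y Exy. rewrite (Hf x), (Hf y), Exy. reflexivity.
  - intros r. exists (r *v u). apply Hf_eq. reflexivity.
  - apply Hf_eq. symmetry; apply rs_scal1.
Qed.

Hypothesis Hsimple : gamma_simple V u.

Lemma infinitesimal_eq0 (w : V) :
  v0 <=v w -> (forall e, 0 < e -> w <=v e *v u) -> w = v0.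
Proof.
  intros Hw He. apply NNPP; intros Hw0.
  assert (Hwu : w <=v u) by (rewrite <- (rs_scal1 _ u); apply He; lra).
  destruct (Hsimple w Hw Hwu Hw0) as [n Hn].
  assert (Hn0 := pos_INR n).
  set (e := / (INR n + 1)).
  assert (He0 : 0 < e) by (unfold e; apply Rinv_0_lt_compat; lra).
  assert (Hsmall : INR n * e < 1).
  { unfold e. apply (Rmult_lt_reg_r (INR n + 1)); [lra|].
    rewrite Rmult_assoc, Rinv_l by lra. lra. }
  assert (Hle : 1 *v u <=v (INR n * e) *v u).
  { rewrite rs_scal1, rs_scalA. eapply rs_le_trans; [exact Hn|].
    apply rs_le_scal; auto. }
  apply scale_unit_le in Hle. lra.
Qed.

Hypothesis Hbound : forall x : V, exists n : nat, x <=v INR n *v u.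

Lemma pos_ge_scale_unit (y : V) :
  v0 <=v y -> y <> v0 -> exists e, 0 < e /\ e *v u <=v y.
Proof.
  intros Hy Hy0. destruct (Hbound y) as [m Hm].
  assert (Hm0 := pos_INR m). set (k := INR m + 1).
  assert (Hk : 0 < k) by (unfold k; lra).
  assert (Hk' : 0 <= / k) by (left; apply Rinv_0_lt_compat; auto).
  set (v := / k *v y).
  assert (Hv1 : v0 <=v v) by (apply scalev_ge0; auto).
  assert (Hv2 : v <=v u).
  { eapply rs_le_trans; [apply rs_le_scal; [exact Hk' | exact Hm]|].
    rewrite <- rs_scalA. rewrite <- (rs_scal1 _ u) at 2. apply lev_scale2r; auto.
    apply (Rmult_le_reg_l k); auto. rewrite <- Rmult_assoc, Rinv_r by lra. unfold k; lra. }
  assert (Hyv : y = k *v v).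
  { unfold v. rewrite <- rs_scalA, Rinv_r by lra. symmetry; apply rs_scal1. }
  assert (Hv0 : v <> v0) by (intros E; apply Hy0; rewrite Hyv, E; apply scalev0).
  destruct (Hsimple v Hv1 Hv2 Hv0) as [n Hn].
  assert (Hn0 : 0 < INR n).
  { destruct (Req_dec (INR n) 0) as [E|E]; [|assert (H := pos_INR n); lra].
    exfalso. rewrite E, scale0v in Hn. apply Hun, rs_le_anti; auto. }
  exists (k / INR n). split; [apply Rdiv_lt_0_compat; auto|].
  apply (rs_le_scal _ (k / INR n)) in Hn; [|left; apply Rdiv_lt_0_compat; auto].
  eapply rs_le_trans; [exact Hn|]. rewrite Hyv, <- !rs_scalA.
  replace (k / INR n * INR n) with k by (field; lra). apply rs_le_refl.
Qed.

Lemma approx_sup_scale_unit (x : V) : exists c,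
  (forall e, 0 < e -> (c - e) *v u <=v x) /\ (forall e, 0 < e -> ~ (c + e) *v u <=v x).
Proof.
  set (E := fun r => r *v u <=v x).
  assert (HE_bound : bound E).
  { destruct (Hbound x) as [m Hm]. exists (INR m). intros r Hr.
    apply scale_unit_le. eapply rs_le_trans; eauto. }
  assert (HE_ne : exists r, E r).
  { destruct (Hbound (vopp x)) as [m Hm]. exists (- INR m). unfold E.
    apply lev_opp in Hm. revert Hm; apply lev_congr; vlinear x u. }
  destruct (completeness E HE_bound HE_ne) as [c [Hub Hlub]].
  exists c; split.
  - intros e He. destruct (classic (is_upper_bound E (c - e))) as [Hce|Hce].
    + apply Hlub in Hce. lra.
    + apply not_all_ex_not in Hce. destruct Hce as [r Hr].
      apply imply_to_and in Hr. destruct Hr as [Hr1 Hr2].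
      eapply rs_le_trans; [|exact Hr1]. apply lev_scale2r; auto. lra.
  - intros e He H. apply Hub in H. lra.
Qed.

(* With [c] the supremum of [{r | r u <= x}], the negative part of [x - c u]
   is infinitesimal, hence [0], and [x - c u] cannot be strictly positive. *)
Lemma multiple_of_unit (x : V) : exists c, x = c *v u.
Proof.
  destruct (approx_sup_scale_unit x) as [c [Hbelow Habove]].
  exists c. set (y := x -v c *v u).
  assert (Hneg : vjoin (vopp y) v0 = v0).
  { apply infinitesimal_eq0; [apply rs_join_r|].
    intros e He. apply rs_join_lub.
    - assert (H := Hbelow e He). apply (rs_le_add _ _ _ (vopp (c *v u))) in H.
      apply lev_opp in H. revert H; apply lev_congr; unfold y; vlinear u x.
    - apply scalev_ge0; auto; lra. }
  assert (Hy : v0 <=v y).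
  { assert (H := rs_join_l _ (vopp y) v0). rewrite Hneg in H. apply lev_opp in H.
    revert H; apply lev_congr; vlinear y. }
  destruct (classic (y = v0)) as [Hy0|Hy0].
  - replace x with (y +v c *v u) by (unfold y; vlinear x u). rewrite Hy0. apply rs_add0.
  - destruct (pos_ge_scale_unit y Hy Hy0) as [e [He Hey]]. exfalso.
    apply (Habove e He). apply (rs_le_add _ _ _ (c *v u)) in Hey.
    revert Hey; apply lev_congr; unfold y; vlinear u x.
Qed.

End MultiplesOfUnit.

Lemma unital_iso_of_kernels_maximal (V : Riesz) (u : V) :
  strong_unit V u -> kernels_maximal V u -> unital_iso_to_reals V u.
Proof.
  intros [Hu0 Hbound] Hmax.
  assert (Hun := unit_neq0_of_kernels_maximal V u Hmax).
  apply (unital_iso_of_multiples u Hu0 Hun).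
  apply (multiple_of_unit u Hu0 Hun); auto.
  apply (gamma_simple_of_kernels_maximal u Hu0 Hun Hmax).
Qed.

Definition R_riesz : Riesz.
Proof.
  refine (Build_Riesz R Rplus 0 Ropp Rmult Rle Rmax Rmin
            _ _ _ _ _ _ _ _ _ _ _ _ _ _ _ _ _ _ _); intros.
  all: first [ ring | apply Rle_antisym; assumption | eapply Rle_trans; eassumption
             | apply Rmult_le_compat_l; assumption | apply Rmax_lub; assumption
             | apply Rmin_glb; assumption | apply Rmax_l | apply Rmax_r | apply Rmin_l
             | apply Rmin_r | lra ].
Defined.

Lemma pm_neg_add_one (M : PMV) (z : M) : pm_add M (pm_neg M z) z = pm_one M.
Proof.
  assert (H := pm_A6c M z (pm_one M)). rewrite pm_A3l in H. rewrite H.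
  unfold pm_mul. rewrite pm_A4b, pm_A2r, pm_A8. reflexivity.
Qed.

Lemma pm_ideal_one_improper (M : PMV) (J : M -> Prop) :
  pm_ideal M J -> J (pm_one M) -> ~ pm_proper M J.
Proof.
  intros [_ [Jdown _]] J1 [z Jz]. apply Jz, (Jdown z (pm_one M)); auto. apply pm_A3l.
Qed.

Section RealStates.
Context (M : PMV) (g : M -> R) (Hg : state_morphism R_riesz 1 M g).

Lemma real_state_multiples (J : M -> Prop) (x : M) : pm_ideal M J -> J x ->
  forall n : nat, exists z, J z /\ g z = Rmin (INR (S n) * g x) 1.
Proof.
  destruct Hg as [gb [gadd _]]; simpl in gb, gadd.
  intros [_ [_ Jadd]] Jx n; induction n as [|n [z [Jz gz]]].
  - exists x. split; auto. destruct (gb x). rewrite Rmult_1_l, Rmin_left; auto.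
  - exists (pm_add M x z). split; auto.
    rewrite gadd, gz, (S_INR (S n)). destruct (gb x).
    unfold Rmin; repeat destruct Rle_dec; lra.
Qed.

Lemma real_state_kernel_maximal : pm_maximal_ideal M (kernel R_riesz M g).
Proof.
  destruct Hg as [gb [gadd [gneg [_ [g0 g1]]]]]; simpl in gb, gadd, gneg, g0, g1.
  unfold kernel; simpl.
  assert (Hideal : pm_ideal M (fun x => g x = 0)).
  { split; [|split].
    - exists (pm_zero M). exact g0.
    - intros x y Hxy Hy. apply (f_equal g) in Hxy.
      rewrite gadd, gneg, g1, Hy in Hxy. destruct (gb x).
      unfold Rmin in Hxy; destruct Rle_dec; lra.
    - intros x y Hx Hy. rewrite gadd, Hx, Hy. unfold Rmin; destruct Rle_dec; lra. }
  split; [exact Hideal | split; [exists (pm_one M); rewrite g1; lra |]].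
  intros J HJ Jproper Hsub x Jx. apply NNPP; intros Hx.
  assert (Ha : 0 < g x) by (destruct (gb x); lra).
  destruct (archimed_cor1 (g x) Ha) as [N [HN HN0]].
  assert (HNa : 1 < INR N * g x).
  { assert (0 < INR N) by (apply lt_0_INR; auto).
    apply (Rmult_lt_compat_l (INR N)) in HN; auto. rewrite Rinv_r in HN; lra. }
  destruct (real_state_multiples J x HJ Jx N) as [z [Jz gz]].
  assert (gz1 : g z = 1) by (rewrite gz, S_INR; unfold Rmin; destruct Rle_dec; lra).
  assert (Jnz : J (pm_neg M z)) by (apply Hsub; rewrite gneg, gz1; ring).
  apply (pm_ideal_one_improper M J HJ); auto.
  rewrite <- (pm_neg_add_one M z). apply HJ; auto.
Qed.

End RealStates.

Section UnitalIso.
Context (V : Riesz) (u : V) (f : V -> R).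
Hypothesis f_add : forall x y, f (x +v y) = f x + f y.
Hypothesis f_join : forall x y, f (vjoin x y) = Rmax (f x) (f y).
Hypothesis f_meet : forall x y, f (vmeet x y) = Rmin (f x) (f y).
Hypothesis f_inj : forall x y, f x = f y -> x = y.
Hypothesis f_unit : f u = 1.

Lemma iso_zero : f v0 = 0.
Proof. assert (E := f_add v0 v0). rewrite rs_add0 in E. lra. Qed.

Lemma iso_opp (x : V) : f (vopp x) = - f x.
Proof. assert (E := f_add (vopp x) x). rewrite rs_addN, iso_zero in E. lra. Qed.

Lemma iso_le (x y : V) : x <=v y -> f x <= f y.
Proof. intros Hxy. rewrite <- (join_r _ _ Hxy), f_join. apply Rmax_l. Qed.

Lemma state_morphism_comp_iso (M : PMV) (s : M -> V) :
  state_morphism V u M s -> state_morphism R_riesz 1 M (fun x => f (s x)).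
Proof.
  intros [sb [sadd [sneg [stil [s0 s1]]]]].
  repeat split; simpl; intros.
  - rewrite <- iso_zero. apply iso_le, sb.
  - rewrite <- f_unit. apply iso_le, sb.
  - rewrite sadd, f_meet, f_add, f_unit. reflexivity.
  - rewrite sneg, f_add, iso_opp, f_unit. reflexivity.
  - rewrite stil, f_add, iso_opp, f_unit. reflexivity.
  - rewrite s0. apply iso_zero.
  - rewrite s1. apply f_unit.
Qed.

Lemma kernel_comp_iso (M : PMV) (s : M -> V) :
  kernel R_riesz M (fun x => f (s x)) = kernel V M s.
Proof.
  apply functional_extensionality; intros x. apply propositional_extensionality.
  unfold kernel; simpl; rewrite <- iso_zero. split; [apply f_inj | intros ->; reflexivity].
Qed.

End UnitalIso.

Lemma kernels_maximal_of_unital_iso (V : Riesz) (u : V) :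
  unital_iso_to_reals V u -> kernels_maximal V u.
Proof.
  intros [f [f_add [_ [f_join [f_meet [f_inj [_ f_unit]]]]]]] M s Hs.
  rewrite <- (kernel_comp_iso V f f_add f_inj).
  apply real_state_kernel_maximal, (state_morphism_comp_iso V u f); auto.
Qed.

Theorem proposition3p20 (V : Riesz) (u : V) (Hu : strong_unit V u) :
  (forall (M : PMV) (s : M -> V),
     state_morphism V u M s -> pm_maximal_ideal M (kernel V M s))
  <-> unital_iso_to_reals V u.
Proof.
  split.
  - apply unital_iso_of_kernels_maximal, Hu.
  - apply kernels_maximal_of_unital_iso.
Qed.
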